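(* Let $(E,\mathcal{E},\nu)$ be a $\sigma$-finite measure space, $\phi$ a Young function satisfying the $\Delta_2$-condition, $w$ a weight function, and $\Psi:E\to E$ a non-singular measurable transformation such that the composition operator $C_\Psi f=f\circ\Psi$ is a bounded linear operator on the Orlicz-Lorentz space $L_{(\phi,w)}$. If there exists a sequence $(A_m)_{m\ge1}$ of measurable sets such that for each $m$, $0<\nu(A_m)<\infty$, $\nu(\Psi^{-m}(A_m))=0$ and $\nu(\Psi^{-(m-1)}(A_m))\neq0$, then $\mathcal{A}(C_\Psi)=\infty$.
   Context: A Young function is a convex $\phi:[0,\infty)\to[0,\infty)$ with $\phi(x)=0\iff x=0$ and $\lim_{x\to\infty}\phi(x)=\infty$; $\Delta_2$-condition: $\phi(2x)\le k\phi(x)$ for some $k>0$ and all $x>0$. A weight function is a non-increasing locally integrable $w:(0,\infty)\to(0,\infty)$ with $\int_0^\infty w=\infty$. For measurable $f$, $\nu_f(s)=\nu\{|f|>s\}$, $f^*(t)=\inf\{s>0:\nu_f(s)\le t\}$; $L_{(\phi,w)}$ is the space of measurable $f:E\to\mathbb{C}$ with $\int_0^\infty\phi(\alpha f^*(t))w(t)\,dt<\infty$ for some $\alpha>0$, with the Luxemburg norm. $\Psi$ non-singular: $\nu(\Psi^{-1}(S))=0$ whenever $\nu(S)=0$; $\Psi^0=\mathrm{id}$. The ascent $\mathcal{A}(T)$ is the smallest integer $m$ with $\mathcal{N}(T^m)=\mathcal{N}(T^{m+1})$ ($\mathcal{N}$ = kernel), and $\infty$ if no such $m$ exists. *)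

From HB Require Import structures.
From mathcomp Require Import all_boot all_order all_algebra.
From mathcomp Require Import all_classical all_reals all_analysis.
From mathcomp Require complex.
Import complex.ComplexField.
Import Order.TTheory GRing.Theory Num.Theory.
Import numFieldNormedType.Exports.
Set Implicit Arguments. Unset Strict Implicit. Unset Printing Implicit Defensive.
Local Open Scope classical_set_scope.
Local Open Scope ring_scope.

Notation Cx R := (complex.complex R).

Definition cmod (R : rcfType) (z : Cx R) : R :=
  Num.sqrt (complex.Re z ^+ 2 + complex.Im z ^+ 2).

Definition cmeasurable d (E : measurableType d) (R : realType) (f : E -> Cx R) :=
  measurable_fun setT (fun x => complex.Re (f x)) /\
  measurable_fun setT (fun x => complex.Im (f x)).

(* Young function phi : [0,oo) -> [0,oo) (only its values on [0,oo) matter) *)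
Definition young_function (R : realType) (phi : R -> R) :=
  [/\ phi 0 = 0,
      (forall x, 0 < x -> 0 < phi x),
      (forall x y l, 0 <= x -> 0 <= y -> 0 <= l -> l <= 1 ->
         phi (l * x + (1 - l) * y) <= l * phi x + (1 - l) * phi y)
    & phi x @[x --> +oo] --> +oo].

Definition delta2 (R : realType) (phi : R -> R) :=
  exists k : R, 0 < k /\ forall x, 0 < x -> phi (2 * x) <= k * phi x.

Definition weight_function (R : realType) (w : R -> R) :=
  [/\ (forall t, 0 < t -> 0 < w t),
      (forall s t, 0 < s -> s <= t -> w t <= w s),
      (forall t, 0 < t ->
         (@lebesgue_measure R).-integrable [set x : R | 0 < x <= t] (fun x => (w x)%:E))
    & (\int[@lebesgue_measure R]_(t in [set t : R | (0 < t)%R]) (w t)%:E = +oo)%E].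

Definition distrib d (E : measurableType d) (R : realType)
  (nu : {measure set E -> \bar R}) (f : E -> Cx R) (s : R) : \bar R :=
  nu [set x | s < cmod (f x)].

(* decreasing rearrangement f*(t) = inf{s > 0 : nu_f(s) <= t} (inf of empty = +oo) *)
Definition rearr d (E : measurableType d) (R : realType)
  (nu : {measure set E -> \bar R}) (f : E -> Cx R) (t : R) : \bar R :=
  ereal_inf [set s%:E | s in [set s : R | 0 < s /\ (distrib nu f s <= t%:E)%E]].

Definition phiE (R : realType) (phi : R -> R) (x : \bar R) : \bar R :=
  match x with
  | r%:E => (phi r)%:E
  | +oo%E => +oo%E
  | -oo%E => 0%E
  end.

Definition OLmod d (E : measurableType d) (R : realType)
  (nu : {measure set E -> \bar R}) (phi w : R -> R) (alpha : R) (f : E -> Cx R)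
  : \bar R :=
  (\int[@lebesgue_measure R]_(t in [set t : R | (0 < t)%R])
      (phiE phi (alpha%:E * rearr nu f t) * (w t)%:E))%E.

Definition inOL d (E : measurableType d) (R : realType)
  (nu : {measure set E -> \bar R}) (phi w : R -> R) (f : E -> Cx R) :=
  cmeasurable f /\ exists alpha : R, 0 < alpha /\ (OLmod nu phi w alpha f < +oo)%E.

Definition OLnorm d (E : measurableType d) (R : realType)
  (nu : {measure set E -> \bar R}) (phi w : R -> R) (f : E -> Cx R) : \bar R :=
  ereal_inf [set e%:E | e in [set e : R | 0 < e /\ (OLmod nu phi w e^-1 f <= 1)%E]].

Definition nonsingular d (E : measurableType d) (R : realType)
  (nu : {measure set E -> \bar R}) (Psi : E -> E) :=
  forall S, measurable S -> nu S = 0%E -> nu (Psi @^-1` S) = 0%E.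

Definition bounded_composition d (E : measurableType d) (R : realType)
  (nu : {measure set E -> \bar R}) (phi w : R -> R) (Psi : E -> E) :=
  (forall f, inOL nu phi w f -> inOL nu phi w (f \o Psi)) /\
  exists c : R, 0 <= c /\ forall f, inOL nu phi w f ->
    (OLnorm nu phi w (f \o Psi) <= c%:E * OLnorm nu phi w f)%E.

(* kernel of (C_Psi)^m on L_(phi,w): elements f with f o Psi^m = 0 in L_(phi,w),
   i.e. nu-a.e. (elements of L_(phi,w) are identified up to nu-a.e. equality;
   the kernel is saturated for that identification) *)
Definition kerC d (E : measurableType d) (R : realType)
  (nu : {measure set E -> \bar R}) (phi w : R -> R) (Psi : E -> E) (m : nat)
  : set (E -> Cx R) :=
  [set f | inOL nu phi w f /\ {ae nu, forall x, f (iter m Psi x) = (0 : Cx R)}].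

Definition ascent_infinite d (E : measurableType d) (R : realType)
  (nu : {measure set E -> \bar R}) (phi w : R -> R) (Psi : E -> E) :=
  ~ exists m : nat, kerC nu phi w Psi m = kerC nu phi w Psi m.+1.

From HB Require Import structures.
From mathcomp Require Import all_boot all_order all_algebra.
From mathcomp Require Import all_classical all_reals all_analysis.
From mathcomp Require complex.
Import complex.ComplexField.
Import Order.TTheory GRing.Theory Num.Theory.
Local Open Scope classical_set_scope.
Local Open Scope ring_scope.

(* The indicator 1_A of a set of finite measure lies in L_(phi,w): its
   rearrangement is the indicator of (0, nu(A)), so its modular is
   phi(1) * int_0^nu(A) w < oo.  For A := A_(m+1), the function
   1_A o Psi^(m+1) vanishes off the null set Psi^-(m+1)(A), while 1_A o Psi^m
   is nonzero on the non-null set Psi^-m(A); hence 1_A lies in the kernel of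
   C_Psi^(m+1) but not in that of C_Psi^m, for every m. *)

Definition indC {d} {E : measurableType d} (R : realType) (A : set E) (x : E) : Cx R :=
  complex.Complex (\1_A x) 0.

Lemma measurable_fun_iter d (E : measurableType d) (Psi : E -> E) (m : nat) :
  measurable_fun setT Psi -> measurable_fun setT (iter m Psi).
Proof.
move=> mPsi; elim: m => [|m IHm] /=; first exact: measurable_id.
exact: measurableT_comp.
Qed.

Lemma weight_integrable_itv (R : realType) (w : R -> R) (a : R) :
  weight_function w -> 0 <= a ->
  (@lebesgue_measure R).-integrable `]0, a[ (fun t => (w t)%:E).
Proof.
move=> [_ _ w_int _] a_ge0.
have a1_gt0 : 0 < a + 1 by rewrite ltr_wpDl.
apply: integrableS (w_int _ a1_gt0) => //.
- rewrite (_ : [set _ | _] = `]0, a + 1]%classic); first exact: measurable_itv.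
  by apply/seteqP; split => t /=; rewrite in_itv.
- move=> t /=; rewrite in_itv /= => /andP[-> t_lt_a] /=.
  by rewrite ltW // (lt_le_trans t_lt_a) // lerDl.
Qed.

Section indicator.
Set Implicit Arguments.
Unset Strict Implicit.
Context {d : measure_display} {E : measurableType d} {R : realType}.
Variable nu : {measure set E -> \bar R}.
Implicit Types (A : set E) (s t : R).

Lemma cmod_indC A x : cmod (indC R A x) = \1_A x.
Proof. by rewrite /cmod /= expr0n /= addr0 sqrtr_sqr ger0_norm. Qed.

Lemma indC_eq0 A x : indC R A x = 0 <-> ~ A x.
Proof.
rewrite /indC /indic; split.
  by case=> + Ax; rewrite mem_set // => /eqP; rewrite oner_eq0.
by move=> nAx; rewrite memNset.
Qed.

Lemma measurable_indC A : measurable A -> cmeasurable (indC R A).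
Proof.
by move=> mA; split; [exact: measurable_realfun.measurable_indic | exact: measurable_cst].
Qed.

Lemma ae_indC_comp_eq0 A (g : E -> E) : measurable A -> measurable_fun setT g ->
  {ae nu, forall x, indC R A (g x) = 0} <-> nu (g @^-1` A) = 0%E.
Proof.
move=> mA mg.
change (nu.-negligible (~` [set x | indC R A (g x) = 0]) <-> nu (g @^-1` A) = 0%E).
have mgA : measurable (g @^-1` A) by rewrite -[_ @^-1` _]setTI; exact: mg.
have -> : ~` [set x | indC R A (g x) = 0] = g @^-1` A.
  by apply/seteqP; split => x /=; rewrite indC_eq0; [exact: contrapT | move=> ? []].
exact: negligibleP.
Qed.

Lemma distrib_indC A s : 0 < s ->
  distrib nu (indC R A) s = if s < 1 then nu A else 0%E.
Proof.
move=> s_gt0; rewrite /distrib; under eq_set do rewrite cmod_indC.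
have [s_lt1|s_ge1] := ltP s 1.
  congr (nu _); apply/seteqP; split => x /=; rewrite /indic.
    by case: (boolP (x \in A)) => [/set_mem //|_]; rewrite ltNge (ltW s_gt0).
  by move=> Ax; rewrite mem_set.
rewrite -(measure0 nu); congr (nu _); apply/seteqP; split => x //=.
by rewrite /indic; case: (x \in A); rewrite ltNge ?s_ge1 ?(ltW s_gt0).
Qed.

Lemma rearr_indC A t : 0 < t ->
  rearr nu (indC R A) t = if (t%:E < nu A)%E then 1%E else 0%E.
Proof.
move=> t_gt0; rewrite /rearr.
have [t_lt_nuA|nuA_le_t] := ltP t%:E (nu A).
  apply/eqP; rewrite eq_le; apply/andP; split.
    apply: ereal_inf_lbound; exists 1 => //; split => //.
    by rewrite distrib_indC // ltxx lee_fin ltW.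
  apply: le_ereal_inf_tmp => _ [s [s_gt0 +] <-].
  rewrite distrib_indC //; case: ltP => [_ /(lt_le_trans t_lt_nuA)|]; last by [].
  by rewrite ltxx.
apply/eqP; rewrite eq_le; apply/andP; split; last first.
  by apply: le_ereal_inf_tmp => _ [s [s_gt0 _] <-]; rewrite lee_fin ltW.
apply/lee_addgt0Pr => e e_gt0; rewrite add0e.
apply: ereal_inf_lbound; exists e => //; split => //.
by rewrite distrib_indC //; case: ifPn; rewrite // lee_fin ltW.
Qed.

Lemma OLmod_indC (phi w : R -> R) A (a : R) : phi 0 = 0 -> nu A = a%:E ->
  OLmod nu phi w 1 (indC R A) =
  (\int[@lebesgue_measure R]_(t in `]0%R, a[%classic) ((phi 1)%:E * (w t)%:E))%E.
Proof.
move=> phi0 nuA; rewrite /OLmod.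
have -> : `]0, a[%classic = [set t : R | 0 < t] `&` [set t | t < a].
  by apply/seteqP; split => t /=; rewrite in_itv /=; [move/andP | move=> [-> ->]].
rewrite integral_mkcondr; apply: eq_integral => t; rewrite inE /= => t_gt0.
rewrite rearr_indC // nuA lte_fin mul1e /patch.
case: ltP => [t_lt_a|a_le_t]; first by rewrite mem_set.
by rewrite memNset /= ?phi0 ?mul0e // => /(le_lt_trans a_le_t); rewrite ltxx.
Qed.

Lemma inOL_indC (phi w : R -> R) A : young_function phi -> weight_function w ->
  measurable A -> (nu A < +oo)%E -> inOL nu phi w (indC R A).
Proof.
move=> [phi0 _ _ _] w_weight mA nuA_fin.
split; first exact: measurable_indC.
exists 1; split => //.
have nuA : nu A = (fine (nu A))%:E by rewrite fineK // ge0_fin_numE.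
rewrite (OLmod_indC w phi0 nuA); apply: integrable_lty; first exact: measurable_itv.
apply: integrableZl; first exact: measurable_itv.
by apply: weight_integrable_itv.
Qed.

Lemma kerC_indC (phi w : R -> R) (Psi : E -> E) A m :
  measurable A -> measurable_fun setT Psi -> inOL nu phi w (indC R A) ->
  kerC nu phi w Psi m (indC R A) <-> nu (iter m Psi @^-1` A) = 0%E.
Proof.
move=> mA mPsi A_in; rewrite /kerC /= -ae_indC_comp_eq0 //; last exact: measurable_fun_iter.
by split=> [[]|].
Qed.

End indicator.

Theorem theorem3p8 (d : measure_display) (E : measurableType d) (R : realType)
  (nu : {measure set E -> \bar R}) (phi w : R -> R) (Psi : E -> E) :
  sigma_finite setT nu ->
  young_function phi -> delta2 phi -> weight_function w ->
  measurable_fun setT Psi -> nonsingular nu Psi ->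
  bounded_composition nu phi w Psi ->
  (exists A : nat -> set E, forall m : nat, (0 < m)%N ->
     [/\ measurable (A m), (0 < nu (A m))%E, (nu (A m) < +oo)%E,
         nu (iter m Psi @^-1` A m) = 0%E
       & nu (iter m.-1 Psi @^-1` A m) != 0%E]) ->
  ascent_infinite nu phi w Psi.
Proof.
move=> _ phi_young _ w_weight mPsi _ _ [A hA] [m ker_eq].
have [mA _ nuA_fin null_next nonnull_m] := hA m.+1 isT.
have A_in := inOL_indC phi_young w_weight mA nuA_fin.
have : kerC nu phi w Psi m.+1 (indC R (A m.+1)) by apply/kerC_indC.
rewrite -ker_eq => /kerC_indC - /(_ mA mPsi A_in) null_m.
by move: nonnull_m; rewrite null_m eqxx.
Qed.
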